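(* Let $H=([0,\infty],\le,u,\bullet)$ be a partially ordered monoid on the extended non-negative reals (with the usual order), and let $(d_X)_X$ be an $H$-composable family of divergences, $d_X:D X\times D X\to[0,\infty]$, indexed by sets $X$. For $\delta\in[0,\infty]$ and a set $X$ define $$R(d)(\delta)(X)=(D X,\{(\mu,\nu): d_X(\mu,\nu)\le\delta,\ d_X(\nu,\mu)\le\delta\}).$$ Then $R(d)$ is a monotone map $([0,\infty],\le)\to\mathbf{Ord}(q,D)$ and is an $H$-graded $\times$-parameterized assignment of $\mathsf{RSRel}$ on the distribution monad $\mathcal{D}$; i.e. for all sets $X,Y$, all $\alpha,\beta\in[0,\infty]$, all $h,h':X\to D Y$ with $h(x)\sim_{R(d)(\alpha)(Y)}h'(x)$ for every $x$, and all $\mu\sim_{R(d)(\beta)(X)}\nu$, we have $h^\dagger(\mu)\sim_{R(d)(\beta\bullet\alpha)(Y)}h'^\dagger(\nu)$.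
   Context: $D X$ is the set of discrete probability distributions on $X$; for $f:X\to D Y$, $f^\dagger(\mu)(y)=\sum_x f(x)(y)\mu(x)$. A divergence on $D X$ is a function $d_X:D X\times D X\to[0,\infty]$ with $d_X(\mu,\mu)=0$ (it need not be symmetric nor satisfy the triangle inequality). The family $(d_X)$ is $H$-composable if for all sets $X,Y$, all $f,g:X\to D Y$ and $\mu,\nu\in D X$: $d_Y(f^\dagger(\mu),g^\dagger(\nu))\le d_X(\mu,\nu)\bullet\sup_{x\in X}d_Y(f(x),g(x))$. $\mathsf{RSRel}$ is the category of sets with a reflexive symmetric relation and relation-preserving maps; $q$ its forgetful functor to $\mathsf{Set}$; $\mathbf{Ord}(q,D)$ is the class of maps assigning to each set $X$ a reflexive symmetric relation on $D X$, preordered by pointwise inclusion. In $\mathsf{RSRel}$, product relates pairs componentwise, and for a set $X$ and object $Z$, $X\dot\pitchfork Z$ is the set of functions $X\to|Z|$ with $h\sim h'$ iff $h(x)\sim h'(x)$ for all $x$; an $H$-graded $\times$-parameterized assignment $\Delta$ is a monotone map from $H$ to $\mathbf{Ord}(q,D)$ such that $(h,\mu)\mapsto h^\dagger(\mu)$ is relation-preserving $(X\dot\pitchfork\Delta\alpha Y)\times\Delta\beta X\to\Delta(\beta\bullet\alpha)Y$. *)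

From HB Require Import structures.
From mathcomp Require Import all_boot all_order all_algebra.
From mathcomp Require Import boolp classical_sets reals ereal esum.
Set Implicit Arguments. Unset Strict Implicit. Unset Printing Implicit Defensive.
Import Order.TTheory GRing.Theory Num.Theory.
Local Open Scope classical_set_scope.
Local Open Scope ring_scope.
Local Open Scope ereal_scope.

Definition tsum (R : realType) (X : Type) (a : X -> \bar R) : \bar R :=
  @esum R {classic X} setT a.

(* A discrete probability distribution on X, represented by its mass
   function mu : X -> R: non-negative masses summing to 1
   (this forces countable support). D X = [set mu | isDistr mu]. *)
Definition isDistr (R : realType) (X : Type) (mu : X -> R) : Prop :=
  (forall x, (0 <= mu x)%R) /\ tsum (fun x => (mu x)%:E) = 1.

Definition kext (R : realType) (X Y : Type) (f : X -> Y -> R) (mu : X -> R)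
  : Y -> R :=
  fun y => fine (tsum (fun x => (f x y * mu x)%:E)).

Definition divergence_family (R : realType)
  (d : forall X : Type, (X -> R) -> (X -> R) -> \bar R) : Prop :=
  forall (X : Type) (mu nu : X -> R), isDistr mu -> isDistr nu ->
    0 <= d X mu nu /\ d X mu mu = 0.

Definition pomonoid_ext (R : realType) (u : \bar R)
  (bullet : \bar R -> \bar R -> \bar R) : Prop :=
  [/\ 0 <= u,
      (forall a b, 0 <= a -> 0 <= b -> 0 <= bullet a b),
      (forall a b c, 0 <= a -> 0 <= b -> 0 <= c ->
          bullet (bullet a b) c = bullet a (bullet b c)),
      (forall a, 0 <= a -> bullet u a = a /\ bullet a u = a) &
      (forall a a' b b', 0 <= a -> 0 <= b -> a <= a' -> b <= b' ->
          bullet a b <= bullet a' b')].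

(* H-composability of the family d.  The sup is taken in [0,oo]
   (hence the extra 0, relevant only for empty X). *)
Definition H_composable (R : realType) (bullet : \bar R -> \bar R -> \bar R)
  (d : forall X : Type, (X -> R) -> (X -> R) -> \bar R) : Prop :=
  forall (X Y : Type) (f g : X -> Y -> R) (mu nu : X -> R),
    (forall x, isDistr (f x)) -> (forall x, isDistr (g x)) ->
    isDistr mu -> isDistr nu ->
    d Y (kext f mu) (kext g nu)
      <= bullet (d X mu nu) (ereal_sup ([set 0] `|` [set d Y (f x) (g x) | x in setT])).

Definition Rd (R : realType)
  (d : forall X : Type, (X -> R) -> (X -> R) -> \bar R)
  (delta : \bar R) (X : Type) (mu nu : X -> R) : Prop :=
  isDistr mu /\ isDistr nu /\ d X mu nu <= delta /\ d X nu mu <= delta.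

From HB Require Import structures.
From mathcomp Require Import all_boot all_order all_algebra.
From mathcomp Require Import boolp classical_sets reals ereal esum.
From mathcomp Require Import fsbigop.
Set Implicit Arguments. Unset Strict Implicit. Unset Printing Implicit Defensive.
Import Order.TTheory GRing.Theory Num.Theory.
Local Open Scope classical_set_scope.
Local Open Scope ring_scope.
Local Open Scope ereal_scope.

(* For the grading,
   H-composability applied to (h, h') and to (h', h) bounds both divergences
   of the Kleisli extensions by beta . sup_x d(h x, h' x); the sup is at most
   alpha, and monotonicity of the monoid product concludes.  It remains that
   Kleisli extension preserves distributions: its total mass is a double sum
   of non-negative terms, whose order of summation can be exchanged. *)

Section esum_lemmas.
Variable R : realType.

Lemma esumZl (T : choiceType) (S : set T) (a : T -> \bar R) (c : R) :
  (0 <= c)%R -> (forall x, 0 <= a x) ->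
  \esum_(i in S) (c%:E * a i) = c%:E * \esum_(i in S) a i.
Proof.
move=> c0 a0; rewrite /esum -ereal_supZl //; last first.
  by apply/set0P; exists 0; exists set0; [exact: fsets_set0|rewrite fsbig_set0].
congr ereal_sup; rewrite image_comp; apply: eq_imagel => A _ /=.
by rewrite ge0_mule_fsumr.
Qed.

Lemma esum_exchange (T1 T2 : choiceType) (a : T1 -> T2 -> \bar R) :
  (forall i j, 0 <= a i j) ->
  \esum_(i in setT) \esum_(j in setT) a i j =
  \esum_(j in setT) \esum_(i in setT) a i j.
Proof.
move=> a0; rewrite !esum_esum //.
apply: (reindex_esum _ _ (fun k => (k.2, k.1))); split.
- by move=> [i j].
- by move=> [i j] [i' j'] _ _ /= [-> ->].
- by move=> [i j] _; exists (j, i).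
Qed.

Lemma tsum_ge_term (X : Type) (a : X -> \bar R) (x : X) : a x <= tsum a.
Proof.
apply: esum_ge; exists [set x]; last by rewrite fsbig_set1.
by split; [exact: cardinality.finite_set1|].
Qed.

Lemma tsum_kext (X Y : Type) (h : X -> Y -> R) (mu : X -> R) :
  (forall x, isDistr (h x)) -> isDistr mu ->
  tsum (fun y => tsum (fun x => (h x y * mu x)%:E)) = 1.
Proof.
move=> hD [mu0 mu1]; rewrite /tsum esum_exchange; last first.
  by move=> y x; rewrite lee_fin mulr_ge0 //; case: (hD x).
rewrite -mu1; apply: eq_esum => x _ /=.
have [h0 h1] := hD x.
under eq_esum do rewrite mulrC EFinM.
by rewrite esumZl // -/(tsum _) h1 mule1.
Qed.

Lemma kext_distr (X Y : Type) (h : X -> Y -> R) (mu : X -> R) :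
  (forall x, isDistr (h x)) -> isDistr mu -> isDistr (kext h mu).
Proof.
move=> hD muD; have mass1 := tsum_kext hD muD.
set S := fun y => tsum _ in mass1.
have S0 y : 0 <= S y.
  by apply: esum_ge0 => x _; rewrite lee_fin mulr_ge0 //; [case: (hD x)|case: muD].
have S_fin y : (fine (S y))%:E = S y.
  have S1 : S y <= 1 by rewrite -mass1; exact: tsum_ge_term.
  by apply: fineK; rewrite ge0_fin_numE // (le_lt_trans S1) // ltey.
split; first by move=> y; rewrite -lee_fin S_fin.
by rewrite -mass1; apply: eq_esum => y _; exact: S_fin.
Qed.

Lemma ereal_sup0_le (X : Type) (f : X -> \bar R) (alpha : \bar R) :
  0 <= alpha -> (forall x, f x <= alpha) ->
  ereal_sup ([set 0] `|` [set f x | x in setT]) <= alpha.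
Proof. by move=> a0 fa; apply: ge_ereal_sup => z [->|[x _ <-]]. Qed.

End esum_lemmas.

Section divergence_relation.
Variables (R : realType) (bullet : \bar R -> \bar R -> \bar R).
Variable d : forall X : Type, (X -> R) -> (X -> R) -> \bar R.
Hypothesis d_div : divergence_family d.
Hypothesis d_comp : H_composable bullet d.
Hypothesis bullet_mono : forall a a' b b', 0 <= a -> 0 <= b -> a <= a' ->
  b <= b' -> bullet a b <= bullet a' b'.

Lemma Rd_refl (delta : \bar R) (X : Type) (mu : X -> R) :
  0 <= delta -> isDistr mu -> Rd d delta mu mu.
Proof.
by move=> d0 muD; have [_ d_mu_mu] := d_div muD muD; rewrite /Rd d_mu_mu.
Qed.

Lemma Rd_sym (delta : \bar R) (X : Type) (mu nu : X -> R) :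
  Rd d delta mu nu -> Rd d delta nu mu.
Proof. by case=> [? [? [? ?]]]. Qed.

Lemma Rd_le (delta delta' : \bar R) (X : Type) (mu nu : X -> R) :
  delta <= delta' -> Rd d delta mu nu -> Rd d delta' mu nu.
Proof.
move=> le [? [? [? ?]]]; do 3!split => //; exact: le_trans le.
Qed.

Lemma div_kext_le (X Y : Type) (alpha beta : \bar R) (h h' : X -> Y -> R)
    (mu nu : X -> R) :
  0 <= alpha -> (forall x, isDistr (h x)) -> (forall x, isDistr (h' x)) ->
  isDistr mu -> isDistr nu ->
  (forall x, d (h x) (h' x) <= alpha) -> d mu nu <= beta ->
  d (kext h mu) (kext h' nu) <= bullet beta alpha.
Proof.
move=> a0 hD h'D muD nuD h_le mu_le.
apply: le_trans (d_comp hD h'D muD nuD) _.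
apply: bullet_mono => //; first by case: (d_div muD nuD).
- by apply: ereal_sup_ubound; left.
- exact: ereal_sup0_le.
Qed.

Lemma Rd_kext (X Y : Type) (alpha beta : \bar R) (h h' : X -> Y -> R)
    (mu nu : X -> R) :
  0 <= alpha -> (forall x, Rd d alpha (h x) (h' x)) -> Rd d beta mu nu ->
  Rd d (bullet beta alpha) (kext h mu) (kext h' nu).
Proof.
move=> a0 hR [muD [nuD [? ?]]].
have hD x : isDistr (h x) by case: (hR x).
have h'D x : isDistr (h' x) by case: (hR x) => _ [].
split; first exact: kext_distr.
split; first exact: kext_distr.
split; apply: div_kext_le => // x; by case: (hR x) => _ [_ []].
Qed.

End divergence_relation.

Theorem theorem7 (R : realType) (u : \bar R)
  (bullet : \bar R -> \bar R -> \bar R)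
  (d : forall X : Type, (X -> R) -> (X -> R) -> \bar R) :
  pomonoid_ext u bullet ->
  divergence_family d ->
  H_composable bullet d ->
  (* each R(d)(delta)(X) is a reflexive symmetric relation on D X *)
  (forall (delta : \bar R) (X : Type), 0 <= delta ->
     (forall mu : X -> R, isDistr mu -> Rd d delta mu mu) /\
     (forall mu nu : X -> R, Rd d delta mu nu -> Rd d delta nu mu)) /\
  (* monotonicity in delta *)
  (forall (delta delta' : \bar R) (X : Type) (mu nu : X -> R),
     0 <= delta -> delta <= delta' ->
     Rd d delta mu nu -> Rd d delta' mu nu) /\
  (* H-graded x-parameterized assignment *)
  (forall (X Y : Type) (alpha beta : \bar R) (h h' : X -> Y -> R)
          (mu nu : X -> R),
     0 <= alpha -> 0 <= beta ->
     (forall x, Rd d alpha (h x) (h' x)) ->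
     Rd d beta mu nu ->
     Rd d (bullet beta alpha) (kext h mu) (kext h' nu)).
Proof.
move=> [_ _ _ _ bullet_mono] d_div d_comp; split; [|split].
- by move=> delta X d0; split=> [mu|mu nu]; [exact: (Rd_refl d_div)|exact: Rd_sym].
- by move=> delta delta' X mu nu _; exact: Rd_le.
- by move=> X Y alpha beta h h' mu nu a0 _; exact: (Rd_kext d_div d_comp bullet_mono).
Qed.
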